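(* Consider the waning-immunity model described in the context. There exists $\delta_o>0$ (depending on the other parameters) such that for all $0\le\delta\le\delta_o$: if $(\omega_n+\mu)(\mu+r)>\beta_0\omega_n+\beta_n\mu$, then the system has no realistic endemic equilibrium (i.e. no equilibrium with $I^*\in(0,1]$); and if $(\omega_n+\mu)(\mu+r)<\beta_0\omega_n+\beta_n\mu$, then the system has exactly one endemic equilibrium with $I^*\in(0,1]$.
   Context: Model: Fix an integer $n\ge 1$ and parameters $\delta\ge 0$ (rate of waning immunity), $\omega\ge 0$ (vaccination rate), $r>0$ (recovery rate), $\mu>0$ (birth = death rate), coverages $p_0=0$, $p_1,\dots,p_n\in[0,1]$, and transmission rates $0\le\beta_0\le\beta_1\le\dots\le\beta_n$ with $\beta_0<\beta_n$. Write $\omega_i=p_i\omega$, $\delta_i=(1-p_i)\delta$ (so $\delta_0=\delta$). The ODE system for $(S_0,\dots,S_n,I)$ is $$S_0'=\sum_{i=1}^n\omega_iS_i-\delta S_0+rI-\beta_0IS_0-\mu S_0,$$ $$S_i'=-\omega_iS_i+\delta_{i-1}S_{i-1}-\delta_iS_i-\beta_iIS_i-\mu S_i\quad(1\le i\le n-1),$$ $$S_n'=\mu-\omega_nS_n+\delta_{n-1}S_{n-1}-\beta_nIS_n-\mu S_n,$$ $$I'=I\sum_{i=0}^n\beta_iS_i-rI-\mu I,$$ with the normalization $\sum_iS_i+I=1$. An endemic equilibrium is an equilibrium $(S_0^*,\dots,S_n^*,I^* )$ of this system satisfying the normalization with $I^*\neq0$. *)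

From HB Require Import structures.
From mathcomp Require Import all_boot all_order all_algebra.
From mathcomp Require Import reals.
Set Implicit Arguments. Unset Strict Implicit. Unset Printing Implicit Defensive.
Import Order.TTheory GRing.Theory Num.Theory.
Local Open Scope ring_scope.

(* Compartments S_0..S_n are the values S 0 .. S n (S : nat -> R; values
   at indices > n are irrelevant).  omega_i = p_i * omega,
   delta_i = (1 - p_i) * delta. *)
Definition equilibrium (R : realType) (n : nat) (delta omega r mu : R)
    (p beta : nat -> R) (S : nat -> R) (I : R) : Prop :=
  let om i := p i * omega in
  let de i := (1 - p i) * delta in
  [/\ \sum_(1 <= i < n.+1) om i * S i - delta * S 0%N + r * I
        - beta 0%N * I * S 0%N - mu * S 0%N = 0,
      (forall i : nat, (1 <= i < n)%N ->
        - om i * S i + de i.-1 * S i.-1 - de i * S i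
        - beta i * I * S i - mu * S i = 0),
      mu - om n * S n + de n.-1 * S n.-1 - beta n * I * S n - mu * S n = 0,
      I * (\sum_(0 <= i < n.+1) beta i * S i) - r * I - mu * I = 0
    & \sum_(0 <= i < n.+1) S i + I = 1 ].

Definition endemic_equilibrium (R : realType) (n : nat) (delta omega r mu : R)
    (p beta : nat -> R) (S : nat -> R) (I : R) : Prop :=
  equilibrium n delta omega r mu p beta S I /\ I != 0.

(* At an endemic equilibrium each S_i with i < n is a multiple of S_0 and S_n
   is affine in S_0, with coefficients depending on I; eliminating S_0 between
   the normalisation and the equation for I turns the equilibria with
   0 < I <= 1 into the roots in (0, 1] of one scalar function h_delta (the
   equation for S_0 is implied by the others).  For delta = 0 only S_0 and S_n
   survive: h_0 decreases with slope at most -kappa < 0, h_0(1) < 0, and h_0(0)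
   has the sign of beta_0 omega_n + beta_n mu - (omega_n + mu)(mu + r).  The
   remaining terms of h_delta carry a factor delta and are bounded and
   Lipschitz on [0, 1] with constant O(delta).  Hence for small delta either
   h_delta <= h_0(0) + O(delta) < 0 on [0, 1], or h_delta is strictly
   decreasing from a positive value at 0 to a negative one at 1 and the
   intermediate value theorem gives exactly one root. *)

From HB Require Import structures.
From mathcomp Require Import all_boot all_order all_algebra.
From mathcomp Require Import all_classical all_reals all_analysis.
From mathcomp Require Import lra ring.
Import Order.TTheory GRing.Theory Num.Theory.
Import numFieldNormedType.Exports.
Local Open Scope ring_scope.
Local Open Scope classical_set_scope.
Set Implicit Arguments. Unset Strict Implicit.

Section BoundedLipschitz.
Variable R : realFieldType.
Implicit Types (K L m : R) (f g : R -> R).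

Definition bdlip01 K f := forall a b, 0 <= a <= 1 -> 0 <= b <= 1 ->
  `|f a| <= K /\ `|f a - f b| <= K * `|a - b|.

Lemma bdlip01_ext K f g : f =1 g -> bdlip01 K f -> bdlip01 K g.
Proof. by move=> fg fK a b ha hb; rewrite -!fg; apply: fK. Qed.

Lemma bdlip01_ge0 K f : bdlip01 K f -> 0 <= K.
Proof. by move=> /(_ 0 0); rewrite lexx ler01 => /(_ isT isT) [/(le_trans _)-> //]. Qed.

Lemma bdlip01W K L f : K <= L -> bdlip01 K f -> bdlip01 L f.
Proof.
move=> KL fK a b ha hb; have [fa fab] := fK a b ha hb.
by split; [exact: le_trans KL | exact: le_trans fab (ler_wpM2r _ KL)].
Qed.

Lemma bdlip01_cst K k : `|k| <= K -> bdlip01 K (fun=> k).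
Proof. by move=> kK a b _ _; rewrite subrr normr0 mulr_ge0 ?(le_trans _ kK). Qed.

Lemma bdlip01_id : bdlip01 1 id.
Proof. by move=> a b ha hb; rewrite mul1r ger0_norm; lra. Qed.

Lemma bdlip01D K L f g : bdlip01 K f -> bdlip01 L g ->
  bdlip01 (K + L) (fun x => f x + g x).
Proof.
move=> fK gL a b ha hb; have [fa fab] := fK a b ha hb; have [ga gab] := gL a b ha hb.
split; first by rewrite (le_trans (ler_normD _ _)) // lerD.
by rewrite opprD addrACA (le_trans (ler_normD _ _)) // mulrDl lerD.
Qed.

Lemma bdlip01N K f : bdlip01 K f -> bdlip01 K (fun x => - f x).
Proof. by move=> fK a b ha hb; rewrite normrN -opprD normrN; apply: fK. Qed.

Lemma bdlip01B K L f g : bdlip01 K f -> bdlip01 L g ->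
  bdlip01 (K + L) (fun x => f x - g x).
Proof. by move=> fK /bdlip01N; apply: bdlip01D. Qed.

Lemma bdlip01M K L f g : bdlip01 K f -> bdlip01 L g ->
  bdlip01 (2 * K * L) (fun x => f x * g x).
Proof.
move=> fK gL a b ha hb; have [fa fab] := fK a b ha hb; have [ga gab] := gL a b ha hb.
have [gb _] := gL b a hb ha.
have K0 := bdlip01_ge0 fK; have L0 := bdlip01_ge0 gL.
have n1 := normr_ge0 (f a); have n2 := normr_ge0 (g a); have n3 := normr_ge0 (g b).
have n4 := normr_ge0 (a - b).
split.
  rewrite normrM; have : `|f a| * `|g a| <= K * L by rewrite ler_pM.
  nra.
have -> : f a * g a - f b * g b = f a * (g a - g b) + g b * (f a - f b) by ring.
rewrite (le_trans (ler_normD _ _)) // !normrM.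
have : `|f a| * `|g a - g b| <= K * (L * `|a - b|) by rewrite ler_pM.
have : `|g b| * `|f a - f b| <= L * (K * `|a - b|) by rewrite ler_pM.
nra.
Qed.

Lemma bdlip01V m L f : 0 < m -> (forall a, 0 <= a <= 1 -> m <= f a) ->
  (forall a b, 0 <= a <= 1 -> 0 <= b <= 1 -> `|f a - f b| <= L * `|a - b|) ->
  bdlip01 (m^-1 + L / m ^+ 2) (fun x => (f x)^-1).
Proof.
move=> m0 fm fL a b ha hb.
have fa := fm a ha; have fb := fm b hb.
have fa0 : 0 < f a by apply: lt_le_trans fa.
have fb0 : 0 < f b by apply: lt_le_trans fb.
have L0 : 0 <= L.
  have := fL 0 1; rewrite !lexx ler01 sub0r normrN normr1 mulr1 => /(_ isT isT).
  exact: le_trans.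
have Lm0 : 0 <= L / m ^+ 2 by rewrite divr_ge0 // exprn_ge0 // ltW.
split.
  rewrite ger0_norm ?invr_ge0 ?(ltW fa0) //.
  have : (f a)^-1 <= m^-1 by rewrite lef_pV2 ?posrE.
  lra.
have -> : (f a)^-1 - (f b)^-1 = (f b - f a) / (f a * f b) by field; rewrite ?gt_eqF.
have fab0 : 0 <= (f a * f b)^-1 by rewrite invr_ge0 mulr_ge0 // ltW.
rewrite normrM distrC (ger0_norm fab0).
have fab : (f a * f b)^-1 <= (m ^+ 2)^-1.
  by rewrite lef_pV2 ?posrE ?mulr_gt0 ?exprn_gt0 // expr2 ler_pM // ltW.
have : `|f a - f b| * (f a * f b)^-1 <= L * `|a - b| * (m ^+ 2)^-1.
  by apply: ler_pM; rewrite ?invr_ge0 ?mulr_ge0 ?fL // ltW.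
have : 0 <= m^-1 * `|a - b| by rewrite mulr_ge0 // invr_ge0 ltW.
rewrite mulrDl; nra.
Qed.

Lemma bdlip01_sum (I : eqType) (r : seq I) (K : I -> R) (F : I -> R -> R) :
  (forall i, i \in r -> bdlip01 (K i) (F i)) ->
  bdlip01 (\sum_(i <- r) K i) (fun x => \sum_(i <- r) F i x).
Proof.
elim: r => [_|j r IH FK].
  rewrite big_nil; apply: (bdlip01_ext (f := fun=> 0)) => [x|]; first by rewrite big_nil.
  by apply: bdlip01_cst; rewrite normr0.
apply: (bdlip01_ext (f := fun x => F j x + \sum_(i <- r) F i x)) => [x|].
  by rewrite big_cons.
rewrite big_cons; apply: bdlip01D; first by apply: FK; rewrite mem_head.
by apply: IH => i ir; apply: FK; rewrite in_cons ir orbT.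
Qed.

End BoundedLipschitz.
Arguments bdlip01_id {R}.

Section Perturbation.
Variable R : realType.
Implicit Types (K L k eta M : R) (f g : R -> R).

Lemma bdlip01_continuous K f :
  bdlip01 K f -> {within `[0, 1], continuous f}.
Proof.
move=> fK; apply/subspace_continuousP => x /= x01; apply/cvgrPdist_lt => e e0.
have K1 : 0 < `|K| + 1 by rewrite ltr_pwDr ?normr_ge0.
apply/nbhs_normP; exists (e / (`|K| + 1)) => [|y /= xy y01]; first by rewrite /= divr_gt0.
move: x01 y01; rewrite !in_itv /= => x01 y01.
have [_ fxy] := fK x y x01 y01; apply: le_lt_trans fxy _.
rewrite ltr_pdivlMr // in xy.
have := normr_ge0 (x - y); have := ler_norm K; nra.
Qed.

Lemma bdlip01_root K f : bdlip01 K f -> 0 < f 0 -> f 1 < 0 ->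
  exists I, 0 < I <= 1 /\ f I = 0.
Proof.
move=> fK f0 f1.
have := @IVT R f 0 1 0 ler01 (bdlip01_continuous fK).
rewrite ge_min le_max (ltW f0) (ltW f1) orbT => /(_ isT) [I].
rewrite in_itv /= => /andP[I0 I1] fI; exists I; split => //.
rewrite I1 andbT lt_neqAle I0 andbT eq_sym.
by apply: contraTneq f0 => I_eq0; rewrite I_eq0 in fI; rewrite fI ltxx.
Qed.

Lemma bdlip01_decreasingD k L f g :
  (forall a b, 0 <= a -> a <= b -> b <= 1 -> f b - f a <= - k * (b - a)) ->
  bdlip01 L g -> L < k ->
  forall a b, 0 <= a -> a < b -> b <= 1 -> f b + g b < f a + g a.
Proof.
move=> fk gL Lk a b a0 ab b1.
have a01 : 0 <= a <= 1 by rewrite a0; apply: le_trans (ltW ab) b1.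
have b01 : 0 <= b <= 1 by rewrite b1 andbT; apply: le_trans (ltW ab).
have [_] := gL b a b01 a01; rewrite ler_norml ger0_norm ?subr_ge0 ?(ltW ab) //.
move=> /andP[_ gba]; have := fk a b a0 (ltW ab) b1.
have : 0 < (k - L) * (b - a) by rewrite mulr_gt0 ?subr_gt0.
lra.
Qed.

Lemma exists_small_scale eta M : 0 < eta ->
  exists2 d0, 0 < d0 <= 1 & forall d, 0 <= d <= d0 -> d * M < eta.
Proof.
move=> eta0; have M1 : 0 < `|M| + 1 by rewrite ltr_pwDr ?normr_ge0.
exists (Num.min 1 (eta / (2 * (`|M| + 1)))) => [|d /andP[d0]].
  by rewrite ge_min lexx lt_min ltr01 divr_gt0 ?mulr_gt0.
rewrite le_min => /andP[_]; rewrite ler_pdivlMr ?mulr_gt0 // => deta.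
have : d * M <= d * (`|M| + 1) by rewrite ler_wpM2l // (le_trans (ler_norm M)) ?lerDl.
lra.
Qed.

End Perturbation.

Section Model.
Variables (R : realType) (n : nat) (omega r mu : R) (p beta : nat -> R).
Hypotheses (n_gt0 : (1 <= n)%N) (omega_ge0 : 0 <= omega) (r_gt0 : 0 < r)
  (mu_gt0 : 0 < mu) (p0 : p 0%N = 0)
  (p_01 : forall i : nat, (1 <= i <= n)%N -> 0 <= p i <= 1)
  (beta0_ge0 : 0 <= beta 0%N)
  (beta_leS : forall i : nat, (i < n)%N -> beta i <= beta i.+1)
  (beta0_lt : beta 0%N < beta n).

Definition om i := p i * omega.
Definition de d i := (1 - p i) * d.
Definition outflow d I i := om i + de d i + beta i * I + mu.
Definition outflow_last I := om n + beta n * I + mu.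

(* At an equilibrium with infective fraction I, S_i = ratio d I i * S_0 for
   i < n and S_n = last_const I + last_coef d I * S_0. *)
Fixpoint ratio d I k :=
  if k is k.+1 then de d k * ratio d I k / outflow d I k.+1 else 1.
Definition last_coef d I := de d n.-1 * ratio d I n.-1 / outflow_last I.
Definition last_const I := mu / outflow_last I.
Definition profile d I x i :=
  if (i < n)%N then ratio d I i * x else last_const I + last_coef d I * x.

Definition mass d I := \sum_(1 <= i < n) ratio d I i + last_coef d I.
Definition force d I :=
  \sum_(1 <= i < n) beta i * ratio d I i + beta n * last_coef d I.
Definition mass_rest I := 1 - I - last_const I.
Definition force_rest I := r + mu - beta n * last_const I.

(* The normalisation and the equation for I read
   S_0 (1 + mass) = mass_rest and S_0 (beta_0 + force) = force_rest;
   h eliminates S_0, and h0 is the part of h that survives at delta = 0. *)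
Definition h0 I := mass_rest I * beta 0%N - force_rest I.
Definition hd d I := mass_rest I * force d I - force_rest I * mass d I.
Definition h d I := h0 I + hd d I.
Definition s0 d I := mass_rest I / (1 + mass d I).

Lemma beta_mono i j : (i <= j <= n)%N -> beta i <= beta j.
Proof.
elim: j => [|j IH] /andP[ij jn]; first by move: ij; rewrite leqn0 => /eqP ->.
case: (ltngtP i j.+1) ij => // [ij _|-> _] //.
by apply: le_trans (IH _) (beta_leS jn); rewrite -ltnS ij ltnW.
Qed.

Lemma beta_ge0 i : (i <= n)%N -> 0 <= beta i.
Proof. by move=> i_le; apply: le_trans beta0_ge0 (beta_mono _); rewrite i_le. Qed.

Lemma beta_le_n i : (i <= n)%N -> beta i <= beta n.
Proof. by move=> i_le; apply: beta_mono; rewrite i_le leqnn. Qed.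

Lemma beta_n_gt0 : 0 < beta n.
Proof. exact: le_lt_trans beta0_ge0 beta0_lt. Qed.

Lemma p_bound i : (i <= n)%N -> 0 <= p i <= 1.
Proof. by case: i => [|i] i_le; [rewrite p0 lexx ler01 | apply: p_01]. Qed.

Lemma om_ge0 i : (i <= n)%N -> 0 <= om i.
Proof. by move=> /p_bound /andP[pi0 _]; rewrite mulr_ge0. Qed.

Lemma de_ge0 d i : 0 <= d -> (i <= n)%N -> 0 <= de d i.
Proof. by move=> d0 /p_bound /andP[_ pi1]; rewrite mulr_ge0 ?subr_ge0. Qed.

Lemma de_le d i : 0 <= d -> (i <= n)%N -> de d i <= d.
Proof. by move=> d0 /p_bound /andP[pi0 pi1]; rewrite /de; nra. Qed.

Lemma outflow_ge d I i : 0 <= d -> 0 <= I -> (i <= n)%N -> mu <= outflow d I i.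
Proof.
move=> d0 I0 i_le; have := om_ge0 i_le; have := de_ge0 d0 i_le.
have := mulr_ge0 (beta_ge0 i_le) I0; rewrite /outflow; lra.
Qed.

Lemma outflow_last_ge I : 0 <= I -> mu <= outflow_last I.
Proof.
move=> I0; have := om_ge0 (leqnn n); have := mulr_ge0 (beta_ge0 (leqnn n)) I0.
rewrite /outflow_last; lra.
Qed.

Lemma ratio_ge0 d I k : 0 <= d -> 0 <= I -> (k <= n)%N -> 0 <= ratio d I k.
Proof.
move=> d0 I0; elim: k => [|k IH] k_le /=; first exact: ler01.
apply: divr_ge0; first by rewrite mulr_ge0 ?de_ge0 ?IH // ltnW.
exact: le_trans (ltW mu_gt0) (outflow_ge d0 I0 k_le).
Qed.

Lemma mass_ge0 d I : 0 <= d -> 0 <= I -> 0 <= mass d I.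
Proof.
move=> d0 I0; rewrite /mass addr_ge0 //.
  by rewrite big_nat sumr_ge0 // => i /andP[_ /ltnW]; apply: ratio_ge0.
apply: divr_ge0; first by rewrite mulr_ge0 ?de_ge0 ?ratio_ge0 ?leq_pred.
exact: le_trans (ltW mu_gt0) (outflow_last_ge I0).
Qed.

Definition Kinv := mu^-1 + beta n / mu ^+ 2.

Lemma Kinv_ge0 : 0 <= Kinv.
Proof.
by rewrite addr_ge0 ?invr_ge0 ?divr_ge0 ?exprn_ge0 ?(ltW mu_gt0) ?(ltW beta_n_gt0).
Qed.

Lemma beta_lipschitz i a b : (i <= n)%N ->
  `|beta i * a - beta i * b| <= beta n * `|a - b|.
Proof.
move=> i_le; rewrite -mulrBr normrM ger0_norm ?beta_ge0 //.
by rewrite ler_wpM2r // beta_le_n.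
Qed.

Lemma inv_outflow_bdlip d i : 0 <= d -> (i <= n)%N ->
  bdlip01 Kinv (fun x => (outflow d x i)^-1).
Proof.
move=> d0 i_le; apply: bdlip01V => // [a /andP[a0 _]|a b _ _].
  exact: outflow_ge.
have -> : outflow d a i - outflow d b i = beta i * a - beta i * b.
  by rewrite /outflow; ring.
exact: beta_lipschitz.
Qed.

Lemma inv_outflow_last_bdlip : bdlip01 Kinv (fun x => (outflow_last x)^-1).
Proof.
apply: bdlip01V => // [a /andP[a0 _]|a b _ _]; first exact: outflow_last_ge.
have -> : outflow_last a - outflow_last b = beta n * a - beta n * b.
  by rewrite /outflow_last; ring.
exact: beta_lipschitz.
Qed.

Lemma de_bdlip d i : 0 <= d -> (i <= n)%N -> bdlip01 d (fun=> de d i).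
Proof. by move=> d0 i_le; apply: bdlip01_cst; rewrite ger0_norm ?de_ge0 ?de_le. Qed.

Lemma ratioS_bdlip d k K : 0 <= d -> (k < n)%N ->
  bdlip01 K (ratio d ^~ k) -> bdlip01 (d * (4 * Kinv * K)) (ratio d ^~ k.+1).
Proof.
move=> d0 k_lt rK; have -> : d * (4 * Kinv * K) = 2 * (2 * d * K) * Kinv by ring.
exact: bdlip01M (bdlip01M (de_bdlip d0 (ltnW k_lt)) rK) (inv_outflow_bdlip d0 k_lt).
Qed.

Lemma ratio_bdlip d k : 0 <= d <= 1 -> (k < n)%N ->
  bdlip01 ((4 * Kinv) ^+ k) (ratio d ^~ k).
Proof.
move=> /andP[d0 d1]; elim: k => [|k IH] k_lt.
  by apply: bdlip01_cst; rewrite normr1 expr0.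
apply: bdlip01W _ (ratioS_bdlip d0 (ltnW k_lt) (IH (ltnW k_lt))).
have : 0 <= 4 * Kinv * (4 * Kinv) ^+ k by rewrite mulr_ge0 ?exprn_ge0 ?mulr_ge0 ?Kinv_ge0.
by rewrite exprS; nra.
Qed.

Lemma ratio_small d k : 0 <= d <= 1 -> (1 <= k < n)%N ->
  bdlip01 (d * (4 * Kinv) ^+ k) (ratio d ^~ k).
Proof.
move=> d01; case: k => // k /andP[_ k_lt]; rewrite exprS.
exact: ratioS_bdlip (proj1 (andP d01)) (ltnW k_lt) (ratio_bdlip d01 (ltnW k_lt)).
Qed.

Lemma last_coef_small d : 0 <= d <= 1 -> bdlip01 (d * (4 * Kinv) ^+ n) (last_coef d).
Proof.
move=> d01; have /andP[d0 _] := d01; have n1_lt : (n.-1 < n)%N by rewrite prednK.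
have -> : d * (4 * Kinv) ^+ n = 2 * (2 * d * (4 * Kinv) ^+ n.-1) * Kinv.
  by rewrite -(prednK n_gt0) exprS /=; ring.
exact: bdlip01M (bdlip01M (de_bdlip d0 (ltnW n1_lt)) (ratio_bdlip d01 n1_lt))
  inv_outflow_last_bdlip.
Qed.

Definition Kmass := \sum_(1 <= i < n.+1) (4 * Kinv) ^+ i.

Lemma mass_small d : 0 <= d <= 1 -> bdlip01 (d * Kmass) (mass d).
Proof.
move=> d01; rewrite /Kmass big_nat_recr //= mulrDr mulr_sumr.
apply: bdlip01D (last_coef_small d01).
by apply: bdlip01_sum => i; rewrite mem_index_iota; apply: ratio_small.
Qed.

Lemma force_small d : 0 <= d <= 1 ->
  bdlip01 (d * (2 * beta n * Kmass)) (force d).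
Proof.
move=> d01; have bn_bound : `|beta n| <= beta n by rewrite ger0_norm ?(ltW beta_n_gt0).
have -> : d * (2 * beta n * Kmass) = \sum_(1 <= i < n) 2 * beta n * (d * (4 * Kinv) ^+ i)
    + 2 * beta n * (d * (4 * Kinv) ^+ n).
  by rewrite /Kmass big_nat_recr //= -!mulr_sumr; ring.
apply: bdlip01D; last exact: bdlip01M (bdlip01_cst bn_bound) (last_coef_small d01).
apply: bdlip01_sum => i; rewrite mem_index_iota => i_range.
have bi_bound : `|beta i| <= beta n.
  by rewrite ger0_norm ?beta_ge0 ?beta_le_n // ltnW; case/andP: i_range.
exact: bdlip01M (bdlip01_cst bi_bound) (ratio_small d01 i_range).
Qed.

Lemma last_const_bdlip : bdlip01 (2 * mu * Kinv) last_const.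
Proof.
have mu_bound : `|mu| <= mu by rewrite ger0_norm ?(ltW mu_gt0).
exact: bdlip01M (bdlip01_cst mu_bound) inv_outflow_last_bdlip.
Qed.

Lemma mass_rest_bdlip : exists K, bdlip01 K mass_rest.
Proof.
have one_bound : `|1 : R| <= 1 by rewrite normr1.
by eexists; apply: bdlip01B (bdlip01B (bdlip01_cst one_bound) bdlip01_id) last_const_bdlip.
Qed.

Lemma force_rest_bdlip : exists K, bdlip01 K force_rest.
Proof.
have rmu_bound : `|r + mu| <= r + mu by rewrite ger0_norm ?addr_ge0 ?(ltW r_gt0) ?(ltW mu_gt0).
have bn_bound : `|beta n| <= beta n by rewrite ger0_norm ?(ltW beta_n_gt0).
eexists; apply: bdlip01B (bdlip01_cst rmu_bound) _.
exact: bdlip01M (bdlip01_cst bn_bound) last_const_bdlip.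
Qed.

Lemma hd_small : exists M, forall d, 0 <= d <= 1 -> bdlip01 (d * M) (hd d).
Proof.
have [K1 K1_mass] := mass_rest_bdlip; have [K2 K2_force] := force_rest_bdlip.
exists (2 * K1 * (2 * beta n * Kmass) + 2 * K2 * Kmass) => d d01.
have := bdlip01B (bdlip01M K1_mass (force_small d01)) (bdlip01M K2_force (mass_small d01)).
by congr bdlip01; ring.
Qed.

Lemma h_bdlip d L : bdlip01 L (hd d) -> exists K, bdlip01 K (h d).
Proof.
move=> hdL; have [K1 K1_mass] := mass_rest_bdlip.
have [K2 K2_force] := force_rest_bdlip.
have b0_bound : `|beta 0%N| <= beta 0%N by rewrite ger0_norm.
by eexists; apply: bdlip01D hdL; apply: bdlip01B K2_force; apply: bdlip01M K1_mass (bdlip01_cst b0_bound).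
Qed.

Definition kappa := (beta n - beta 0%N) * mu * beta n / outflow_last 1 ^+ 2.

Lemma kappa_gt0 : 0 < kappa.
Proof.
have D1_gt0 : 0 < outflow_last 1 := lt_le_trans mu_gt0 (outflow_last_ge ler01).
by rewrite divr_gt0 ?exprn_gt0 ?mulr_gt0 ?subr_gt0 ?beta_n_gt0.
Qed.

Lemma h0_decreasing a b : 0 <= a -> a <= b -> b <= 1 ->
  h0 b - h0 a <= - kappa * (b - a).
Proof.
move=> a0 ab b1; have b0 := le_trans a0 ab.
have Da := outflow_last_ge a0; have Db := outflow_last_ge b0.
have D1 := outflow_last_ge ler01.
have Da_gt0 := lt_le_trans mu_gt0 Da; have Db_gt0 := lt_le_trans mu_gt0 Db.
have D1_gt0 := lt_le_trans mu_gt0 D1.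
have Dab : outflow_last a <= outflow_last b.
  by rewrite lerD2r lerD2l ler_wpM2l ?(ltW beta_n_gt0).
have Db1 : outflow_last b <= outflow_last 1.
  by rewrite lerD2r lerD2l ler_wpM2l ?(ltW beta_n_gt0).
have const_ab : last_const b - last_const a =
    - (mu * beta n * (b - a)) * (outflow_last a * outflow_last b)^-1.
  rewrite /last_const; have -> : mu * beta n * (b - a) =
      mu * (outflow_last b - outflow_last a) by rewrite /outflow_last; ring.
  by field; rewrite ?gt_eqF.
have -> : h0 b - h0 a =
    - (b - a) * beta 0%N + (beta n - beta 0%N) * (last_const b - last_const a).
  by rewrite /h0 /mass_rest /force_rest; ring.
rewrite const_ab /kappa.
have W0 : 0 <= (beta n - beta 0%N) * (mu * beta n * (b - a)).
  by rewrite !mulr_ge0 ?subr_ge0 ?(ltW beta0_lt) ?(ltW mu_gt0) ?(ltW beta_n_gt0).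
have inv_le : (outflow_last 1 ^+ 2)^-1 <= (outflow_last a * outflow_last b)^-1.
  rewrite lef_pV2 ?posrE ?mulr_gt0 ?exprn_gt0 // expr2.
  by rewrite ler_pM ?(ltW Da_gt0) ?(ltW Db_gt0) // (le_trans Dab).
have ba0 : 0 <= b - a by rewrite subr_ge0.
have := ler_wpM2l W0 inv_le; have := mulr_ge0 ba0 beta0_ge0.
rewrite !mulNr !mulrN; lra.
Qed.

Lemma h0_at1 : h0 1 < 0.
Proof.
have D1_gt0 := lt_le_trans mu_gt0 (outflow_last_ge ler01).
have const_gt0 : 0 < last_const 1 by rewrite divr_gt0.
have gap : 0 < outflow_last 1 - (beta n - beta 0%N).
  have := om_ge0 (leqnn n); rewrite /outflow_last mulr1.
  by move: beta0_ge0 mu_gt0; lra.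
have := mulr_gt0 const_gt0 gap.
have : last_const 1 * outflow_last 1 = mu by rewrite mulfVK ?gt_eqF.
rewrite /h0 /mass_rest /force_rest; move: beta0_ge0 r_gt0; lra.
Qed.

Lemma outflow_last0_gt0 : 0 < om n + mu.
Proof. by have := om_ge0 (leqnn n); move: mu_gt0; lra. Qed.

Lemma h0_at0 :
  h0 0 * (om n + mu) = beta 0%N * om n + beta n * mu - (om n + mu) * (mu + r).
Proof.
have := outflow_last0_gt0.
rewrite /h0 /mass_rest /force_rest /last_const /outflow_last mulr0 addr0 => D0_gt0.
by field; rewrite gt_eqF.
Qed.

Lemma h0_at0_lt0 :
  beta 0%N * om n + beta n * mu < (om n + mu) * (mu + r) -> h0 0 < 0.
Proof. by rewrite -(pmulr_llt0 _ outflow_last0_gt0) h0_at0 subr_lt0. Qed.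

Lemma h0_at0_gt0 :
  (om n + mu) * (mu + r) < beta 0%N * om n + beta n * mu -> 0 < h0 0.
Proof. by rewrite -(pmulr_lgt0 _ outflow_last0_gt0) h0_at0 subr_gt0. Qed.

Lemma profile_sums d I x :
  \sum_(0 <= i < n.+1) profile d I x i = x * (1 + mass d I) + last_const I /\
  \sum_(0 <= i < n.+1) beta i * profile d I x i
    = x * (beta 0%N + force d I) + beta n * last_const I.
Proof.
have mid i : (1 <= i < n)%N -> profile d I x i = ratio d I i * x.
  by case/andP=> _ i_lt; rewrite /profile i_lt.
rewrite !big_nat_recr //= !(big_ltn n_gt0) (eq_big_nat _ _ mid).
rewrite (eq_big_nat _ _ (F1 := fun i => beta i * profile d I x i)
  (F2 := fun i => beta i * ratio d I i * x)); last by move=> i /mid ->; rewrite mulrA.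
rewrite /profile n_gt0 ltnn /=.
by rewrite -!mulr_suml /mass /force; split; ring.
Qed.

Lemma endemic_profile d S I : 0 <= d -> 0 <= I ->
  endemic_equilibrium n d omega r mu p beta S I ->
  forall i, (i <= n)%N -> S i = profile d I (S 0%N) i.
Proof.
move=> d0 I0 [[_ eq_mid eq_last _ _] _] i; rewrite /profile.
have ratioP k : (k < n)%N -> S k = ratio d I k * S 0%N.
  elim: k => [|k IH] k_lt /=; first by rewrite mul1r.
  have D_gt0 := lt_le_trans mu_gt0 (outflow_ge d0 I0 (ltnW k_lt)).
  have eq_k : S k.+1 * outflow d I k.+1 = de d k * S k.
    by have /= := eq_mid k.+1; rewrite k_lt /outflow /om /de => /(_ isT); lra.
  rewrite IH ?(ltnW k_lt) // in eq_k.
  by apply: (mulIf (lt0r_neq0 D_gt0)); rewrite eq_k; field; apply: lt0r_neq0.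
case: ltnP => [/ratioP //|i_ge i_le]; have -> : i = n by apply/eqP; rewrite eqn_leq i_le.
have Dl_gt0 := lt_le_trans mu_gt0 (outflow_last_ge I0).
have eq_n : S n * outflow_last I = mu + de d n.-1 * S n.-1.
  by move: eq_last => /=; rewrite /outflow_last /om /de; lra.
rewrite (ratioP n.-1) ?prednK // in eq_n.
by apply: (mulIf (lt0r_neq0 Dl_gt0)); rewrite eq_n /last_coef /last_const; field; apply: lt0r_neq0.
Qed.

Lemma endemic_balance d S I : 0 <= d -> 0 < I ->
  endemic_equilibrium n d omega r mu p beta S I ->
  mass_rest I = S 0%N * (1 + mass d I) /\
  force_rest I = S 0%N * (beta 0%N + force d I).
Proof.
move=> d0 I0 eqS; have prof := endemic_profile d0 (ltW I0) eqS.
case: eqS => [[_ _ _ eq_I eq_N] I_neq0].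
have [sum_S sum_bS] := profile_sums d I (S 0%N).
have on_range i : (0 <= i < n.+1)%N -> S i = profile d I (S 0%N) i.
  by rewrite ltnS => /andP[_ /prof].
rewrite (eq_big_nat _ _ on_range) sum_S in eq_N.
rewrite (eq_big_nat _ _ (F1 := fun i => beta i * S i)
  (F2 := fun i => beta i * profile d I (S 0%N) i)) in eq_I; last first.
  by move=> i /on_range ->.
have {}eq_I : I * (\sum_(0 <= i < n.+1) beta i * profile d I (S 0%N) i - r - mu) = 0.
  by rewrite -[RHS]eq_I; ring.
move: eq_I => /eqP; rewrite mulf_eq0 (negbTE I_neq0) /= sum_bS => /eqP eq_I.
by rewrite /mass_rest /force_rest; split; lra.
Qed.

Lemma endemic_root d S I : 0 <= d -> 0 < I ->
  endemic_equilibrium n d omega r mu p beta S I ->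
  h d I = 0 /\ forall i, (i <= n)%N -> S i = profile d I (s0 d I) i.
Proof.
move=> d0 I0 eqS; have [rest_mass rest_force] := endemic_balance d0 I0 eqS.
have mass1_gt0 : 0 < 1 + mass d I by have := mass_ge0 d0 (ltW I0); lra.
split; first by rewrite /h /h0 /hd rest_mass rest_force; ring.
have -> : s0 d I = S 0%N by rewrite /s0 rest_mass mulfK ?gt_eqF.
exact: endemic_profile d0 (ltW I0) eqS.
Qed.

(* Summing all right-hand sides gives N' = mu (1 - N) for the total
   population N, so the equation for S_0 follows from the others. *)
Lemma rhs_total d S I :
  (\sum_(1 <= i < n.+1) om i * S i - d * S 0%N + r * I
     - beta 0%N * I * S 0%N - mu * S 0%N)
  + \sum_(1 <= i < n) (- om i * S i + de d i.-1 * S i.-1 - de d i * S i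
     - beta i * I * S i - mu * S i)
  + (mu - om n * S n + de d n.-1 * S n.-1 - beta n * I * S n - mu * S n)
  + (I * (\sum_(0 <= i < n.+1) beta i * S i) - r * I - mu * I)
  = mu - mu * (\sum_(0 <= i < n.+1) S i + I).
Proof.
rewrite (eq_big_nat _ _ (F1 := fun i => - om i * S i + de d i.-1 * S i.-1
     - de d i * S i - beta i * I * S i - mu * S i)
   (F2 := fun i => (de d i.-1 * S i.-1 - de d i * S i)
   + (- (om i * S i) - I * (beta i * S i) - mu * S i))); last by move=> i _; ring.
rewrite big_split /= (telescope_sumr_eq (fun k => - (de d k.-1 * S k.-1))
  (fun i => de d i.-1 * S i.-1 - de d i * S i)) //;
  last by move=> k _ /=; ring.
rewrite !sumrB sumrN -!mulr_sumr !big_nat_recr //= !(big_ltn n_gt0) /=.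
have -> : de d 0%N = d by rewrite /de p0 subr0 mul1r.
ring.
Qed.

Lemma root_endemic d I : 0 <= d -> 0 < I -> h d I = 0 ->
  endemic_equilibrium n d omega r mu p beta (profile d I (s0 d I)) I.
Proof.
move=> d0 I0 hI; have I0' := ltW I0.
set x := s0 d I; set S := profile d I x.
have mass1_gt0 : 0 < 1 + mass d I by have := mass_ge0 d0 I0'; lra.
have [sum_S sum_bS] := profile_sums d I x.
have x_mass : x * (1 + mass d I) = mass_rest I by rewrite /x /s0 divfK ?gt_eqF.
have x_force : x * (beta 0%N + force d I) = force_rest I.
  apply: (mulIf (lt0r_neq0 mass1_gt0)); rewrite mulrAC x_mass.
  by move: hI; rewrite /h /h0 /hd; lra.
have eq_N : \sum_(0 <= i < n.+1) S i + I = 1.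
  by rewrite sum_S x_mass /mass_rest; ring.
have eq_I : I * (\sum_(0 <= i < n.+1) beta i * S i) - r * I - mu * I = 0.
  by rewrite sum_bS x_force /force_rest; ring.
have eq_mid i : (1 <= i < n)%N ->
    - om i * S i + de d i.-1 * S i.-1 - de d i * S i - beta i * I * S i
    - mu * S i = 0.
  case: i => // i /andP[_ i_lt]; rewrite /S /profile i_lt ltnW //=.
  have := lt_le_trans mu_gt0 (outflow_ge d0 I0' (ltnW i_lt)).
  by rewrite /outflow => D_gt0; field; apply: lt0r_neq0.
have eq_last : mu - om n * S n + de d n.-1 * S n.-1 - beta n * I * S n
    - mu * S n = 0.
  have n1_lt : (n.-1 < n)%N by rewrite prednK.
  rewrite /S /profile ltnn n1_lt.
  have := lt_le_trans mu_gt0 (outflow_last_ge I0').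
  by rewrite /last_coef /last_const /outflow_last => D_gt0; field; apply: lt0r_neq0.
split; last by rewrite gt_eqF.
have mid_sum : \sum_(1 <= i < n) (- om i * S i + de d i.-1 * S i.-1
    - de d i * S i - beta i * I * S i - mu * S i) = 0.
  by rewrite big_nat big1 // => i; apply: eq_mid.
split=> //; have := rhs_total d S I.
by rewrite mid_sum eq_last eq_I eq_N /om /de; lra.
Qed.

Lemma no_endemic d M : 0 <= d -> bdlip01 (d * M) (hd d) -> d * M < - h0 0 ->
  ~ exists S I, endemic_equilibrium n d omega r mu p beta S I /\ 0 < I <= 1.
Proof.
move=> d0 hdM dM_h0 [S [I [eqS /andP[I0 I1]]]].
have [hI _] := endemic_root d0 I0 eqS.
have I01 : 0 <= I <= 1 by rewrite (ltW I0) I1.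
have [+ _] := hdM I I I01 I01; rewrite ler_norml => /andP[_ hdI].
have := h0_decreasing (lexx 0) (ltW I0) I1.
have := mulr_ge0 (ltW kappa_gt0) (ltW I0).
by move: hI; rewrite /h; lra.
Qed.

Lemma unique_endemic d M : 0 <= d -> bdlip01 (d * M) (hd d) ->
  d * M < kappa -> d * M < - h0 1 -> d * M < h0 0 ->
  exists S I, (endemic_equilibrium n d omega r mu p beta S I /\ 0 < I <= 1) /\
    forall S' I', endemic_equilibrium n d omega r mu p beta S' I' ->
      0 < I' <= 1 -> I' = I /\ (forall i, (i <= n)%N -> S' i = S i).
Proof.
move=> d0 hdM dM_kappa dM_h1 dM_h0.
have h_decr : forall a b, 0 <= a -> a < b -> b <= 1 -> h d b < h d a :=
  bdlip01_decreasingD h0_decreasing hdM dM_kappa.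
have [K hK] := h_bdlip hdM.
have [h_at0 h_at1] : 0 < h d 0 /\ h d 1 < 0.
  have z01 : 0 <= (0 : R) <= 1 by apply/andP; split; lra.
  have o01 : 0 <= (1 : R) <= 1 by apply/andP; split; lra.
  have [+ _] := hdM 0 0 z01 z01; have [+ _] := hdM 1 1 o01 o01.
  by rewrite /h !ler_norml => /andP[_ hd1] /andP[hd0 _]; split; lra.
have [I [/andP[I0 I1] hI]] := bdlip01_root hK h_at0 h_at1.
exists (profile d I (s0 d I)), I; split; first by split; [apply: root_endemic | rewrite I0].
move=> S' I' eqS' /andP[I'0 I'1]; have [hI' S'E] := endemic_root d0 I'0 eqS'.
have I'_eq : I' = I.
  case: (ltgtP I' I) => // [I'I | II'].
    by have := h_decr _ _ (ltW I'0) I'I I1; rewrite hI hI' ltxx.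
  by have := h_decr _ _ (ltW I0) II' I'1; rewrite hI hI' ltxx.
by split => // i i_le; rewrite S'E // I'_eq.
Qed.

Lemma endemic_threshold : exists delta_o : R, 0 < delta_o /\
  forall delta : R, 0 <= delta <= delta_o ->
    ((p n * omega + mu) * (mu + r) > beta 0%N * (p n * omega) + beta n * mu ->
       ~ (exists (S : nat -> R) (I : R),
            endemic_equilibrium n delta omega r mu p beta S I /\ 0 < I <= 1))
    /\
    ((p n * omega + mu) * (mu + r) < beta 0%N * (p n * omega) + beta n * mu ->
       exists (S : nat -> R) (I : R),
         (endemic_equilibrium n delta omega r mu p beta S I /\ 0 < I <= 1) /\
         forall (S' : nat -> R) (I' : R),
           endemic_equilibrium n delta omega r mu p beta S' I' -> 0 < I' <= 1 ->
           I' = I /\ (forall i : nat, (i <= n)%N -> S' i = S i)).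
Proof.
have [M hdM] := hd_small.
(* The value 1 is arbitrary: if h0 0 = 0, neither alternative applies. *)
pose eta := Num.min kappa
  (Num.min (- h0 1) (if h0 0 == 0 then 1 else `|h0 0|)).
have eta_gt0 : 0 < eta.
  rewrite !lt_min kappa_gt0 oppr_gt0 h0_at1 /=.
  by case: eqP => [_ | /eqP h00]; [exact: ltr01 | rewrite normr_gt0].
have [d0 /andP[d0_gt0 d0_le1] dM_eta] := exists_small_scale M eta_gt0.
exists d0; split => // d /andP[d_ge0 d_le].
have d01 : 0 <= d <= 1 by rewrite d_ge0 (le_trans d_le).
have {dM_eta} dM : d * M < eta by rewrite dM_eta ?d_ge0.
have dM_kappa : d * M < kappa by apply: lt_le_trans dM _; rewrite ge_min lexx.
have dM_h1 : d * M < - h0 1 by apply: lt_le_trans dM _; rewrite !ge_min lexx orbT.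
have dM_h0 : h0 0 != 0 -> d * M < `|h0 0|.
  by move=> /negbTE h00; apply: lt_le_trans dM _; rewrite !ge_min h00 lexx !orbT.
split => [/h0_at0_lt0 h00 | /h0_at0_gt0 h00].
  by apply: no_endemic (hdM d d01) _ => //; rewrite -ltr0_norm // dM_h0 ?ltr0_neq0.
by apply: unique_endemic (hdM d d01) _ _ _ => //; rewrite -[h0 0]gtr0_norm ?dM_h0 ?lt0r_neq0.
Qed.

End Model.

Theorem theorem3 (R : realType) (n : nat) (omega r mu : R) (p beta : nat -> R) :
  (1 <= n)%N ->
  0 <= omega -> 0 < r -> 0 < mu ->
  p 0%N = 0 ->
  (forall i : nat, (1 <= i <= n)%N -> 0 <= p i <= 1) ->
  0 <= beta 0%N ->
  (forall i : nat, (i < n)%N -> beta i <= beta i.+1) ->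
  beta 0%N < beta n ->
  exists delta_o : R, 0 < delta_o /\
    forall delta : R, 0 <= delta <= delta_o ->
      ((p n * omega + mu) * (mu + r) > beta 0%N * (p n * omega) + beta n * mu ->
         ~ (exists (S : nat -> R) (I : R),
              endemic_equilibrium n delta omega r mu p beta S I /\ 0 < I <= 1))
      /\
      ((p n * omega + mu) * (mu + r) < beta 0%N * (p n * omega) + beta n * mu ->
         exists (S : nat -> R) (I : R),
           (endemic_equilibrium n delta omega r mu p beta S I /\ 0 < I <= 1) /\
           forall (S' : nat -> R) (I' : R),
             endemic_equilibrium n delta omega r mu p beta S' I' -> 0 < I' <= 1 ->
             I' = I /\ (forall i : nat, (i <= n)%N -> S' i = S i)).
Proof. exact: endemic_threshold. Qed.
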